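(* Let $w>0$ and $c_w=\sum_{y=-\infty}^{\infty}e^{-y^2/(2w^2)}$. For integers $x,h$ with $|x|\leq h$ and $h$ even, $$\frac{1}{c_w}\sum_{y=-\infty}^{\infty}e^{-\frac{(y\pm x)^2+y^2}{4w^2}}\geq e^{-\frac{h^2}{8w^2}}.$$ *)

From Stdlib Require Import Reals ZArith.
From Coquelicot Require Import Coquelicot.
Open Scope R_scope.

Definition zsum (f : Z -> R) : R :=
  Series (fun n : nat => f (Z.of_nat n)) +
  Series (fun n : nat => f (- Z.of_nat (S n))%Z).

Definition cw (w : R) : R :=
  zsum (fun y => exp (- (IZR y) ^ 2 / (2 * w ^ 2))).

(* Completing the square, (y + x)^2 + y^2 = 2 (y + x/2)^2 + x^2/2, so the sum is
   e^{-x^2/(8w^2)} θ(x/2) with θ(t) = Σ_y e^{-(y+t)^2/(2w^2)} and c_w = θ(0).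
   θ is even and 1-periodic, and pairing the terms of θ(-t) and θ(t) through
   e^a + e^{-a} >= 2 gives θ(t) >= e^{-t^2/(2w^2)} θ(0).  Writing x = 2k + r with
   r ∈ {0, 1}, θ(x/2) = θ(r/2); as h is even, an odd x has |x| <= h - 1, whence
   x^2 + r^2 <= h^2. *)

From Stdlib Require Import Reals ZArith Lra Lia Psatz.
From Coquelicot Require Import Coquelicot.
Open Scope R_scope.

Definition zsummable (f : Z -> R) : Prop :=
  ex_series (fun n : nat => f (Z.of_nat n)) /\
  ex_series (fun n : nat => f (- Z.of_nat (S n))%Z).

Lemma Series_nonneg (a : nat -> R) :
  ex_series a -> (forall n, 0 <= a n) -> 0 <= Series a.
Proof.
  intros ha a_ge0.
  rewrite <- (Rmult_0_l (Series a)), <- Series_scal_l.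
  apply Series_le; [intro n; rewrite Rmult_0_l; split; [lra | apply a_ge0] | exact ha].
Qed.

Lemma zsum_ext (f g : Z -> R) : (forall y, f y = g y) -> zsum f = zsum g.
Proof. intro efg; unfold zsum; f_equal; apply Series_ext; intro n; apply efg. Qed.

Lemma zsum_scal_l (a : R) (f : Z -> R) : zsum (fun y => a * f y) = a * zsum f.
Proof. unfold zsum; rewrite !Series_scal_l; ring. Qed.

Lemma zsummable_plus (f g : Z -> R) :
  zsummable f -> zsummable g -> zsummable (fun y => f y + g y).
Proof.
  intros [fp fn] [gp gn].
  split; apply (ex_series_plus (V := R_NormedModule)); assumption.
Qed.

Lemma zsum_plus (f g : Z -> R) : zsummable f -> zsummable g ->
  zsum (fun y => f y + g y) = zsum f + zsum g.
Proof.
  intros [fp fn] [gp gn]; unfold zsum.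
  rewrite Series_plus, Series_plus by assumption; ring.
Qed.

Lemma zsum_le (f g : Z -> R) :
  zsummable g -> (forall y, 0 <= f y <= g y) -> zsum f <= zsum g.
Proof.
  intros [gp gn] fg; unfold zsum.
  apply Rplus_le_compat; apply Series_le; auto.
Qed.

Lemma zsum_incr_1 (f : Z -> R) : zsummable f ->
  Series (fun n : nat => f (Z.of_nat n)) =
    f 0%Z + Series (fun n : nat => f (Z.of_nat (S n))) /\
  Series (fun n : nat => f (- Z.of_nat n)%Z) =
    f 0%Z + Series (fun n : nat => f (- Z.of_nat (S n))%Z).
Proof.
  intros [fp fn]; split.
  - rewrite Series_incr_1 by exact fp; reflexivity.
  - rewrite Series_incr_1 by (apply ex_series_incr_1; exact fn); reflexivity.
Qed.

Lemma zsum_pos (f : Z -> R) :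
  zsummable f -> (forall y, 0 <= f y) -> 0 < f 0%Z -> 0 < zsum f.
Proof.
  intros fs f_ge0 f0_gt0.
  destruct (zsum_incr_1 f fs) as [ep _].
  destruct fs as [fp fn].
  unfold zsum; rewrite ep.
  assert (0 <= Series (fun n : nat => f (Z.of_nat (S n)))).
  { apply Series_nonneg; [apply ex_series_incr_1 in fp; exact fp | auto]. }
  assert (0 <= Series (fun n : nat => f (- Z.of_nat (S n))%Z)) by (apply Series_nonneg; auto).
  lra.
Qed.

Lemma zsum_shift1 (f : Z -> R) : zsummable f -> zsum (fun y => f (y + 1)%Z) = zsum f.
Proof.
  intro fs; destruct (zsum_incr_1 f fs) as [ep en]; unfold zsum.
  rewrite (Series_ext (fun n : nat => f (Z.of_nat n + 1)%Z)
             (fun n : nat => f (Z.of_nat (S n)))) by (intro; f_equal; lia).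
  rewrite (Series_ext (fun n : nat => f (- Z.of_nat (S n) + 1)%Z)
             (fun n : nat => f (- Z.of_nat n)%Z)) by (intro; f_equal; lia).
  rewrite ep, en; ring.
Qed.

Lemma zsum_opp (f : Z -> R) : zsummable f -> zsum (fun y => f (- y)%Z) = zsum f.
Proof.
  intro fs; destruct (zsum_incr_1 f fs) as [ep en]; unfold zsum.
  rewrite (Series_ext (fun n : nat => f (- - Z.of_nat (S n))%Z)
             (fun n : nat => f (Z.of_nat (S n)))) by (intro; f_equal; lia).
  rewrite ep, en; ring.
Qed.

Definition gauss (K c : R) (y : Z) : R := exp (- (IZR y + c) ^ 2 / K).

Lemma exp_le_compat (a b : R) : a <= b -> exp a <= exp b.
Proof.
  intros [lt | ->]; [left; apply exp_increasing, lt | apply Rle_refl].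
Qed.

Lemma exp_pow (a : R) (n : nat) : exp (INR n * a) = exp a ^ n.
Proof.
  induction n as [| n IH]; simpl pow.
  - rewrite Rmult_0_l; apply exp_0.
  - rewrite S_INR, Rmult_plus_distr_r, Rmult_1_l, exp_plus, IH; ring.
Qed.

Section Gaussian.

Variable K : R.
Hypothesis K_gt0 : 0 < K.

(* (n + c)^2 + c^2 >= n^2 / 2 >= n / 2 gives domination by a geometric series. *)
Lemma ex_series_gauss_nat (c : R) :
  ex_series (fun n : nat => exp (- (INR n + c) ^ 2 / K)).
Proof.
  apply (ex_series_le (V := R_CompleteNormedModule) _
           (fun n => exp (c ^ 2 / K) * exp (- (1 / 2) / K) ^ n)).
  - intro n; change (norm ?v) with (Rabs v).
    rewrite Rabs_pos_eq by (left; apply exp_pos).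
    rewrite <- exp_pow, <- exp_plus; apply exp_le_compat.
    assert (n_le_sq : INR n <= INR n * INR n).
    { destruct n; [simpl; lra | rewrite S_INR; pose proof (pos_INR n); nra]. }
    pose proof (pow2_ge_0 (INR n + 2 * c)).
    assert (0 < / K) by (apply Rinv_0_lt_compat, K_gt0).
    unfold Rdiv; nra.
  - apply (ex_series_scal_l (V := R_NormedModule)), ex_series_geom.
    rewrite Rabs_pos_eq by (left; apply exp_pos).
    rewrite <- exp_0 at 2; apply exp_increasing.
    assert (0 < (1 / 2) / K) by (apply Rdiv_lt_0_compat; lra).
    lra.
Qed.

Lemma zsummable_gauss (c : R) : zsummable (gauss K c).
Proof.
  split.
  - apply (ex_series_ext (fun n : nat => exp (- (INR n + c) ^ 2 / K))).
    + intro n; unfold gauss; rewrite <- INR_IZR_INZ; reflexivity.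
    + apply ex_series_gauss_nat.
  - apply (ex_series_ext (fun n : nat => exp (- (INR n + (1 - c)) ^ 2 / K))).
    + intro n; unfold gauss; rewrite opp_IZR, <- INR_IZR_INZ, S_INR.
      do 3 f_equal; ring.
    + apply ex_series_gauss_nat.
Qed.

Lemma zsum_gauss_succ (c : R) : zsum (gauss K (c + 1)) = zsum (gauss K c).
Proof.
  rewrite <- (zsum_shift1 _ (zsummable_gauss c)).
  apply zsum_ext; intro y; unfold gauss; rewrite plus_IZR.
  do 3 f_equal; ring.
Qed.

Lemma zsum_gauss_periodic (c : R) (k : Z) :
  zsum (gauss K (c + IZR k)) = zsum (gauss K c).
Proof.
  induction k as [| k IH | k IH] using Z.peano_ind.
  - rewrite Rplus_0_r; reflexivity.
  - rewrite succ_IZR, <- Rplus_assoc, zsum_gauss_succ; exact IH.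
  - rewrite <- IH, <- (zsum_gauss_succ (c + IZR (Z.pred k))), <- Z.sub_1_r,
      minus_IZR.
    do 2 f_equal; ring.
Qed.

Lemma zsum_gauss_opp (c : R) : zsum (gauss K (- c)) = zsum (gauss K c).
Proof.
  rewrite <- (zsum_opp _ (zsummable_gauss (- c))).
  apply zsum_ext; intro y; unfold gauss; rewrite opp_IZR.
  do 3 f_equal; ring.
Qed.

Lemma gauss_pair_ge (t : R) (y : Z) :
  2 * exp (- t ^ 2 / K) * gauss K 0 y <= gauss K (- t) y + gauss K t y.
Proof.
  set (a := 2 * IZR y * t / K).
  assert (cosh_ge : 2 <= exp a + exp (- a)).
  { pose proof (exp_ineq1_le a); pose proof (exp_ineq1_le (- a)); lra. }
  replace (gauss K (- t) y) with (exp (- t ^ 2 / K) * gauss K 0 y * exp a).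
  2: { unfold gauss, a; rewrite <- !exp_plus; f_equal; field; lra. }
  replace (gauss K t y) with (exp (- t ^ 2 / K) * gauss K 0 y * exp (- a)).
  2: { unfold gauss, a; rewrite <- !exp_plus; f_equal; field; lra. }
  assert (0 < exp (- t ^ 2 / K) * gauss K 0 y)
    by (apply Rmult_lt_0_compat; apply exp_pos).
  nra.
Qed.

Lemma zsum_gauss_ge (t : R) :
  exp (- t ^ 2 / K) * zsum (gauss K 0) <= zsum (gauss K t).
Proof.
  assert (pair_sum : 2 * (exp (- t ^ 2 / K) * zsum (gauss K 0)) <=
                     zsum (gauss K (- t)) + zsum (gauss K t)).
  { rewrite <- Rmult_assoc, <- zsum_scal_l, <- zsum_plus
      by apply zsummable_gauss.
    apply zsum_le; [apply zsummable_plus; apply zsummable_gauss |].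
    intro y; split; [| apply gauss_pair_ge].
    left; apply Rmult_lt_0_compat; [apply Rmult_lt_0_compat; [lra |] |];
      apply exp_pos. }
  rewrite zsum_gauss_opp in pair_sum; lra.
Qed.

Lemma zsum_gauss_pos (c : R) : 0 < zsum (gauss K c).
Proof.
  apply zsum_pos; [apply zsummable_gauss | intro; left | ]; apply exp_pos.
Qed.

End Gaussian.

Lemma sq_add_sq_mod2_le (x h : Z) :
  (Z.abs x <= h)%Z -> Z.Even h -> (x * x + (x mod 2) * (x mod 2) <= h * h)%Z.
Proof.
  intros hxh [m ->].
  pose proof (Z.div_mod x 2); pose proof (Z.mod_pos_bound x 2).
  destruct (Z.abs_spec x) as [[? E] | [? E]]; rewrite E in hxh; nia.
Qed.

Lemma zsum_gauss_half_int_ge (K : R) (x h : Z) : 0 < K ->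
  (Z.abs x <= h)%Z -> Z.Even h ->
  exp (- (IZR h / 2) ^ 2 / K) * zsum (gauss K 0) <=
    exp (- (IZR x / 2) ^ 2 / K) * zsum (gauss K (IZR x / 2)).
Proof.
  intros K_gt0 hxh heven.
  set (r := (x mod 2)%Z).
  assert (x_half : IZR x / 2 = IZR r / 2 + IZR (x / 2)).
  { rewrite (Z.div_mod x 2) at 1 by lia; rewrite plus_IZR, mult_IZR; fold r; field. }
  assert (sq_le : IZR x * IZR x + IZR r * IZR r <= IZR h * IZR h).
  { rewrite <- !mult_IZR, <- plus_IZR; apply IZR_le, sq_add_sq_mod2_le; assumption. }
  rewrite x_half at 2; rewrite zsum_gauss_periodic by exact K_gt0.
  apply Rle_trans with
    (exp (- (IZR x / 2) ^ 2 / K) * (exp (- (IZR r / 2) ^ 2 / K) * zsum (gauss K 0))).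
  - rewrite <- Rmult_assoc, <- exp_plus.
    apply Rmult_le_compat_r; [left; apply zsum_gauss_pos, K_gt0 |].
    apply exp_le_compat.
    assert (0 < / K) by (apply Rinv_0_lt_compat, K_gt0).
    unfold Rdiv; nra.
  - apply Rmult_le_compat_l; [left; apply exp_pos | apply zsum_gauss_ge, K_gt0].
Qed.

Lemma exp_sum_squares_gauss (w x u : R) : w <> 0 ->
  exp (- ((u + x) ^ 2 + u ^ 2) / (4 * w ^ 2)) =
    exp (- (x / 2) ^ 2 / (2 * w ^ 2)) * exp (- (u + x / 2) ^ 2 / (2 * w ^ 2)).
Proof.
  intro w_neq0; rewrite <- exp_plus; f_equal; field; exact w_neq0.
Qed.

Lemma cw_gauss_ratio_ge (w : R) (x h : Z) : 0 < w ->
  (Z.abs x <= h)%Z -> Z.Even h ->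
  / cw w * zsum (fun y => exp (- ((IZR y + IZR x) ^ 2 + (IZR y) ^ 2) / (4 * w ^ 2)))
    >= exp (- (IZR h) ^ 2 / (8 * w ^ 2)).
Proof.
  intros w_gt0 hxh heven.
  set (K := 2 * w ^ 2).
  assert (K_gt0 : 0 < K) by (unfold K; nra).
  assert (cw_gauss : cw w = zsum (gauss K 0)).
  { apply zsum_ext; intro y; unfold gauss; rewrite Rplus_0_r; reflexivity. }
  rewrite (zsum_ext _ (fun y => exp (- (IZR x / 2) ^ 2 / K) * gauss K (IZR x / 2) y))
    by (intro y; apply exp_sum_squares_gauss; lra).
  replace (- IZR h ^ 2 / (8 * w ^ 2)) with (- (IZR h / 2) ^ 2 / K)
    by (unfold K; field; lra).
  rewrite zsum_scal_l, cw_gauss.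
  pose proof (zsum_gauss_pos K K_gt0 0).
  apply Rle_ge, (Rmult_le_reg_l (zsum (gauss K 0))); [assumption |].
  rewrite <- Rmult_assoc, Rinv_r, Rmult_1_l, Rmult_comm by lra.
  apply zsum_gauss_half_int_ge; assumption.
Qed.

Theorem lemma3 (w : R) (x h : Z) (hw : 0 < w)
    (hxh : (Z.abs x <= h)%Z) (heven : Z.Even h) :
  / cw w * zsum (fun y => exp (- ((IZR y + IZR x) ^ 2 + (IZR y) ^ 2) / (4 * w ^ 2)))
    >= exp (- (IZR h) ^ 2 / (8 * w ^ 2))
  /\
  / cw w * zsum (fun y => exp (- ((IZR y - IZR x) ^ 2 + (IZR y) ^ 2) / (4 * w ^ 2)))
    >= exp (- (IZR h) ^ 2 / (8 * w ^ 2)).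
Proof.
  split; [now apply cw_gauss_ratio_ge |].
  rewrite (zsum_ext _
    (fun y => exp (- ((IZR y + IZR (- x)) ^ 2 + (IZR y) ^ 2) / (4 * w ^ 2))))
    by (intro y; rewrite opp_IZR; reflexivity).
  apply cw_gauss_ratio_ge; [exact hw | rewrite Z.abs_opp; exact hxh | exact heven].
Qed.
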